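(* Let $u$ be a node and let $tx_i = t_{u,k,l}$ (the $l$-th transaction in the $k$-th block $B_{u,k}$ of $u$'s individual chain) be a transaction that is confirmed by an abstract $A_{u,k'}$ with $k' \geq k$. Then there does not exist a chain of confirmed blocks $\{B'_{u,1}, B'_{u,2}, \ldots, B'_{u,k'}\}$ of node $u$ in which all hashes are correct (i.e. the first element of each $B'_{u,m}$, $m\ge 2$, equals $H(B'_{u,m-1})$) and whose $l$-th transaction of the $k$-th block satisfies $t'_{u,k,l} \neq tx_i$.
   Context: There are $N$ nodes with identities $1,\dots,N$ and a public key infrastructure. $H$ is a hash function assumed unbreakable (collision-resistant), and $Sig_u(X)$ denotes a digital signature of $X$ by node $u$, assumed unforgeable. A transaction is a five-tuple $tx_i=\langle \mathrm{Source}_i, s_i, d_i, a_i, r_i\rangle$ (set of source transactions, sender, receiver, transacted value, remaining value). Each node $u$ keeps an individual chain of blocks $B_{u,1}, B_{u,2},\ldots$, where $B_{u,k}=\{H(B_{u,k-1}), t_{u,k,1}, t_{u,k,2},\ldots\}$ is an ordered set and $t_{u,k,l}$ denotes the $l$-th transaction in $B_{u,k}$, sent by $u$ (the genesis block $B_{u,1}$ has no predecessor hash). The abstract of $B_{u,k}$ is $A_{u,k}=\langle u,k,H(B_{u,k}), Sig_u(u\|k\|H(B_{u,k}))\rangle$. A main chain, maintained by a Byzantine-fault-tolerant consensus protocol, contains abstracts; everything on it is agreed on by all honest nodes and cannot be altered. A block $B_{u,k}$ is confirmed (by $A_{u,k'}$) if (i) an abstract $A_{u,k'}$ with $k'\ge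 k$ is on the main chain, and (ii) every abstract $A_{u,l}$ of node $u$ on the main chain with $l\le k'$ is compliant with its corresponding block (i.e. contains its hash and a correct signature). A transaction $tx_i$ with $s_i=u$, $tx_i\in B_{u,k}$, is confirmed (by $A_{u,k'}$) if $B_{u,k}$ is confirmed by $A_{u,k'}$. *)

From Stdlib Require Import List Arith Lia.
Import ListNotations.
Set Implicit Arguments.

(* A transaction <Source_i, s_i, d_i, a_i, r_i>; source transactions are referred to by identifiers. *)
Record Tx := mkTx {
  tx_src : list nat;
  tx_snd : nat;
  tx_rcv : nat;
  tx_amt : nat;
  tx_rem : nat
}.

(* A block B_{u,k} = {H(B_{u,k-1}), t_{u,k,1}, t_{u,k,2}, ...}; genesis has no predecessor hash. *)
Record Block (Hash : Type) := mkBlock {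
  blk_prev : option Hash;
  blk_txs  : list Tx
}.

Record MCAbstract (Hash Sg : Type) := mkAbstract {
  abs_node : nat;
  abs_idx  : nat;
  abs_hash : Hash;
  abs_sig  : Sg
}.

(* Hash function assumed unbreakable: idealized as injective. *)
Definition collision_resistant (Hash : Type) (H : Block Hash -> Hash) : Prop :=
  forall b1 b2, H b1 = H b2 -> b1 = b2.

Definition compliant (Hash Sg : Type) (H : Block Hash -> Hash)
  (Sig : nat -> nat * nat * Hash -> Sg) (a : MCAbstract Hash Sg) (b : Block Hash) : Prop :=
  abs_hash a = H b /\ abs_sig a = Sig (abs_node a) (abs_node a, abs_idx a, abs_hash a).

(* Block B_{u,k} of the chain B (indexed from 1) is confirmed by A_{u,k'} w.r.t. main chain `main`. *)
Definition block_confirmed_by (Hash Sg : Type) (H : Block Hash -> Hash)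
  (Sig : nat -> nat * nat * Hash -> Sg) (main : list (MCAbstract Hash Sg))
  (u : nat) (B : nat -> Block Hash) (k k' : nat) : Prop :=
  k <= k' /\
  (exists a, In a main /\ abs_node a = u /\ abs_idx a = k') /\
  (forall a, In a main -> abs_node a = u -> abs_idx a <= k' -> compliant H Sig a (B (abs_idx a))).

Definition individual_chain (Hash : Type) (H : Block Hash -> Hash) (B : nat -> Block Hash) : Prop :=
  blk_prev (B 1) = None /\ forall m, 2 <= m -> blk_prev (B m) = Some (H (B (m - 1))).

(* An abstract on the main chain pins down, by collision resistance, the block whose hash it
   carries; so any two chains of u confirmed by the same abstract A_{u,k'} share block k'.
   Every block stores the hash of its predecessor, so equality of block m forces equality of
   block m - 1, and the two chains agree all the way down to block k: they cannot disagree on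
   the l-th transaction of B_{u,k}. *)
From Stdlib Require Import List Arith Lia.

Set Implicit Arguments.

Definition hash_linked (Hash : Type) (H : Block Hash -> Hash) (B : nat -> Block Hash) (n : nat) :
  Prop :=
  forall m, 2 <= m <= n -> blk_prev (B m) = Some (H (B (m - 1))).

Section CollisionResistance.

Variables (Hash : Type) (H : Block Hash -> Hash).
Hypothesis H_cr : collision_resistant H.

Lemma compliant_inj (Sg : Type) (Sig : nat -> nat * nat * Hash -> Sg)
    (a : MCAbstract Hash Sg) (b1 b2 : Block Hash) :
  compliant H Sig a b1 -> compliant H Sig a b2 -> b1 = b2.
Proof.
  intros [E1 _] [E2 _].
  apply H_cr; congruence.
Qed.

Lemma blk_prev_inj (b1 b2 p1 p2 : Block Hash) :
  blk_prev b1 = Some (H p1) -> blk_prev b2 = Some (H p2) -> b1 = b2 -> p1 = p2.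
Proof.
  intros E1 E2 ->.
  apply H_cr; congruence.
Qed.

Lemma hash_linked_le (B : nat -> Block Hash) (m n : nat) :
  m <= n -> hash_linked H B n -> hash_linked H B m.
Proof.
  intros Hmn HB j Hj; apply HB; lia.
Qed.

Lemma hash_linked_eq_below (B B' : nat -> Block Hash) (n : nat) :
  hash_linked H B n -> hash_linked H B' n -> B n = B' n ->
  forall m, 1 <= m <= n -> B m = B' m.
Proof.
  induction n as [|n IH]; intros HB HB' Etop m Hm; [lia|].
  destruct (Nat.eq_dec m (S n)) as [-> | Hne]; [exact Etop|].
  apply IH; [apply hash_linked_le with (S n); auto .. | | lia].
  replace n with (S n - 1) by lia.
  apply blk_prev_inj with (B (S n)) (B' (S n)); [apply HB | apply HB' | exact Etop]; lia.
Qed.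

End CollisionResistance.

Lemma individual_chain_hash_linked (Hash : Type) (H : Block Hash -> Hash)
    (B : nat -> Block Hash) (n : nat) :
  individual_chain H B -> hash_linked H B n.
Proof.
  intros [_ HB] m Hm; apply HB; lia.
Qed.

Theorem theorem1 :
  forall (Hash Sg : Type) (H : Block Hash -> Hash) (Sig : nat -> nat * nat * Hash -> Sg)
    (N : nat) (main : list (MCAbstract Hash Sg)) (u : nat)
    (B : nat -> Block Hash) (k k' l : nat) (txi : Tx),
    collision_resistant H ->
    1 <= u <= N ->
    individual_chain H B ->
    1 <= k ->
    nth_error (blk_txs (B k)) l = Some txi ->
    tx_snd txi = u ->
    block_confirmed_by H Sig main u B k k' ->
    ~ (exists B' : nat -> Block Hash,
          (forall m, 2 <= m <= k' -> blk_prev (B' m) = Some (H (B' (m - 1)))) /\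
          (forall m, 1 <= m <= k' -> block_confirmed_by H Sig main u B' m k') /\
          (exists t', nth_error (blk_txs (B' k)) l = Some t' /\ t' <> txi)).
Proof.
  intros Hash Sg H Sig N main u B k k' l txi H_cr _ HB Hk Htx _
    [Hkk' [[a [Ha [Hau Hak']]] Hcompl]] [B' [HB' [Hconf' [t' [Ht' Hne]]]]].
  destruct (Hconf' k (conj Hk Hkk')) as [_ [_ Hcompl']].
  assert (Etop : B k' = B' k').
  { rewrite <- Hak'.
    apply (compliant_inj H_cr (Sig := Sig) (a := a)); [apply Hcompl | apply Hcompl']; auto; lia. }
  assert (Ek : B k = B' k).
  { apply (hash_linked_eq_below H_cr (n := k')); [| exact HB' | exact Etop | lia].
    apply individual_chain_hash_linked; exact HB. }
  rewrite Ek, Ht' in Htx.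
  injection Htx as ->.
  contradiction.
Qed.
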